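(* Let $n,q$ be positive integers and let $f_{n,q}:\mathbb{C}^3\to\mathbb{C}$, $f_{n,q}(x,y,z)=x-3x^{2n+1}y^{2q}+2x^{3n+1}y^{3q}+yz$. Then the Łojasiewicz number at infinity of $f_{n,q}$ is $L_\infty(f_{n,q})=-\frac{n}{q}$.
   Context: For a polynomial $g:\mathbb{C}^m\to\mathbb{C}$, let $\operatorname{grad} g(x)=\left(\overline{\frac{\partial g}{\partial x_1}(x)},\dots,\overline{\frac{\partial g}{\partial x_m}(x)}\right)$. If $g$ has non-isolated singularities (critical points), set $L_\infty(g)=-\infty$. If $g$ has only isolated singularities (in particular, if it has no critical points), the Łojasiewicz number at infinity $L_\infty(g)$ is the supremum of the set of $\nu\in\mathbb{R}$ for which there exist $A>0$, $B>0$ such that for all $x\in\mathbb{C}^m$ with $\|x\|\ge B$ one has $A\|x\|^\nu\le\|\operatorname{grad} g(x)\|$. Equivalently, $L_\infty(g)=\lim_{r\to\infty}\frac{\log\varphi(r)}{\log r}$ where $\varphi(r)=\inf_{\|x\|=r}\|\operatorname{grad} g(x)\|$. *)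

From HB Require Import structures.
From mathcomp Require Import all_boot all_order all_algebra.
From mathcomp Require Import mpoly.
From mathcomp Require Import boolp classical_sets reals ereal exp.
From mathcomp Require complex.
Import complex.ComplexField.
Import Order.TTheory GRing.Theory Num.Theory.
Local Open Scope ring_scope.
Local Open Scope classical_set_scope.

Set Implicit Arguments.
Unset Strict Implicit.
Unset Printing Implicit Defensive.

Notation Cx R := (complex.complex R).

Definition cconj (R : realType) (z : Cx R) : Cx R :=
  complex.Complex (complex.Re z) (- complex.Im z).

Definition vnorm (R : realType) (m : nat) (x : 'I_m -> Cx R) : R :=
  Num.sqrt (\sum_(i < m) (complex.Re (x i) ^+ 2 + complex.Im (x i) ^+ 2)).

(* Partial derivative dg/dx_i evaluated at x (formal derivative of the
   polynomial g, which coincides with the complex partial derivative). *)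
Definition pderiv_at (R : realType) (m : nat) (g : mpoly.mpoly m (Cx R))
  (i : 'I_m) (x : 'I_m -> Cx R) : Cx R :=
  mpoly.meval x (mpoly.mderiv i g).

Definition grad (R : realType) (m : nat) (g : mpoly.mpoly m (Cx R))
  (x : 'I_m -> Cx R) : 'I_m -> Cx R :=
  fun i => cconj (pderiv_at g i x).

Definition critical (R : realType) (m : nat) (g : mpoly.mpoly m (Cx R))
  (x : 'I_m -> Cx R) : Prop :=
  forall i : 'I_m, pderiv_at g i x = 0.

Definition isolated_singularities (R : realType) (m : nat)
  (g : mpoly.mpoly m (Cx R)) : Prop :=
  forall x, critical g x ->
    exists2 e : R, 0 < e &
      forall y, critical g y -> vnorm (fun i => y i - x i) < e -> y = x.

Definition loj_exponents (R : realType) (m : nat) (g : mpoly.mpoly m (Cx R))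
  : set R :=
  [set nu : R | exists A B : R, 0 < A /\ 0 < B /\
     forall x : 'I_m -> Cx R, B <= vnorm x ->
       A * (vnorm x) `^ nu <= vnorm (grad g x)].

Definition L_infty (R : realType) (m : nat) (g : mpoly.mpoly m (Cx R))
  : \bar R :=
  if `[< isolated_singularities g >]
  then ereal_sup [set (nu%:E)%E | nu in loj_exponents g]
  else (-oo)%E.

Definition var3 (R : realType) (k : nat) (hk : (k < 3)%N)
  : mpoly.mpoly 3 (Cx R) :=
  mpoly.mpolyX (Cx R) (mpoly.mnm1 (Ordinal hk)).

Definition f_nq (R : realType) (n q : nat) : mpoly.mpoly 3 (Cx R) :=
  let X := @var3 R 0 isT in
  let Y := @var3 R 1 isT in
  let Z := @var3 R 2 isT in
  X - 3%:R * (X ^+ (2 * n + 1) * Y ^+ (2 * q))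
    + 2%:R * (X ^+ (3 * n + 1) * Y ^+ (3 * q)) + Y * Z.

From HB Require Import structures.
From mathcomp Require Import all_boot all_order all_algebra.
From mathcomp Require Import mpoly.
From mathcomp Require Import boolp classical_sets reals ereal exp.
From mathcomp Require complex.
Import complex.ComplexField.
From mathcomp Require Import ring lra zify.
Import Order.TTheory GRing.Theory Num.Theory.
Local Open Scope ring_scope.

(* Write [u = x^n y^q]. Then [df/dz = y] and [df/dx = 1 - 3(2n+1)u^2 + 2(3n+1)u^3],
   which equals [1] when [y = 0]: there are no critical points. On the curve
   [(X, X^(-n/q), 0)] we have [u = 1], where [df/dx] and [df/dy] vanish, so the
   gradient has norm [X^(-n/q)] and no exponent above [-n/q] is admissible.
   Conversely, for [||v|| = r >= 1] either [|y| >= d r^(-n/q)], bounding [df/dz],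
   or [|u| <= r^n (d r^(-n/q))^q <= d], so that [|df/dx| >= 1/2]; with
   [d = 1/(2(12n+5))] both cases give [||grad f|| >= d r^(-n/q)]. *)

Section MpolyDerivative.
Variables (K : comNzRingType) (m : nat) (v : 'I_m -> K).

Lemma meval_mderivX (i j : 'I_m) : (mpolyX K U_(j))^`M(i).@[v] = (j == i)%:R.
Proof.
rewrite mderivX mevalZ mnm1E; case: eqP => [->|_]; last by rewrite mul0r.
rewrite (_ : (U_(i) - U_(i))%MM = 0%MM) ?mpolyX0 ?meval1 ?mulr1 //.
by apply/mnmP => k; rewrite mnmBE mnm0E subnn.
Qed.

Lemma meval_mderivXn (i : 'I_m) (p : {mpoly K[m]}) k :
  (p ^+ k)^`M(i).@[v] = k%:R * p.@[v] ^+ k.-1 * p^`M(i).@[v].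
Proof.
elim: k => [|k IH]; first by rewrite expr0 -mpolyC1 mderivC meval0 !mul0r.
rewrite exprS mderivM mevalD !mevalM IH rmorphXn /=.
case: k IH => [|k] IH; first by rewrite /= !(mul0r, mulr0, addr0, expr0, mulr1, mul1r).
rewrite /= exprS -[(k.+2)%:R]natr1 -[(k.+1)%:R]natr1; ring.
Qed.

Lemma mderiv_natM (i : 'I_m) k (p : {mpoly K[m]}) :
  (k%:R * p)^`M(i) = k%:R * p^`M(i).
Proof. by rewrite -mpolyC_nat mderiv_mulC. Qed.

End MpolyDerivative.

Local Notation i0 := (Ordinal (isT : (0 < 3)%N)).
Local Notation i1 := (Ordinal (isT : (1 < 3)%N)).
Local Notation i2 := (Ordinal (isT : (2 < 3)%N)).

(* Stated over an abstract ring: computing directly over [Cx R] makes the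
   [meval] rewrites unify painfully slowly. *)
Section GenericShape.
Variables (K : comNzRingType) (v : 'I_3 -> K) (a b c d : nat).
Local Notation X := (mpolyX K U_(i0)).
Local Notation Y := (mpolyX K U_(i1)).
Local Notation Z := (mpolyX K U_(i2)).
Local Notation x := (v i0).
Local Notation y := (v i1).
Local Notation z := (v i2).

Lemma meval_mderiv_f_shape i :
  (X - 3 * (X ^+ a * Y ^+ b) + 2 * (X ^+ c * Y ^+ d) + Y * Z)^`M(i).@[v] =
  let e j := (j == i)%:R in
  e i0 - 3 * (a%:R * x ^+ a.-1 * e i0 * y ^+ b
              + x ^+ a * (b%:R * y ^+ b.-1 * e i1))
  + 2 * (c%:R * x ^+ c.-1 * e i0 * y ^+ d
         + x ^+ c * (d%:R * y ^+ d.-1 * e i1))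
  + (e i1 * z + y * e i2).
Proof.
rewrite !mderivD !mderivN !mderiv_natM !mderivM.
rewrite !(rmorph_nat, mevalD, mevalN, mevalM, meval_mderivXn, meval_mderivX).
by rewrite !rmorphXn /= !mevalXU.
Qed.
End GenericShape.

Section PartialDerivatives.
Variables (R : realType) (n q : nat) (v : 'I_3 -> Cx R).
Local Notation x := (v i0).
Local Notation y := (v i1).
Local Notation z := (v i2).
Local Notation u := (x ^+ n * y ^+ q).

Lemma pderiv_f_nq i : pderiv_at (f_nq R n q) i v =
  let e j := (j == i)%:R in
  e i0 - 3 * ((2 * n + 1)%:R * x ^+ (2 * n) * e i0 * y ^+ (2 * q)
              + x ^+ (2 * n + 1) * ((2 * q)%:R * y ^+ (2 * q).-1 * e i1))
  + 2 * ((3 * n + 1)%:R * x ^+ (3 * n) * e i0 * y ^+ (3 * q)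
         + x ^+ (3 * n + 1) * ((3 * q)%:R * y ^+ (3 * q).-1 * e i1))
  + (e i1 * z + y * e i2).
Proof. by rewrite /pderiv_at /f_nq /var3 meval_mderiv_f_shape !addn1. Qed.

Lemma pderiv_f_nq_x : pderiv_at (f_nq R n q) i0 v =
  1 - (3 * (2 * n + 1))%:R * u ^+ 2 + (2 * (3 * n + 1))%:R * u ^+ 3.
Proof.
rewrite pderiv_f_nq /= !mulr1 !mulr0 !natrM !exprMn -!exprM.
rewrite !(mulnC n) !(mulnC q); ring.
Qed.

Lemma pderiv_f_nq_y : (0 < q)%N -> pderiv_at (f_nq R n q) i1 v =
  (6 * q)%:R * x ^+ (2 * n + 1) * y ^+ (2 * q).-1 * (u - 1) + z.
Proof.
move=> q_gt0; rewrite pderiv_f_nq /= !mulr1 !mulr0.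
have -> : (3 * n + 1 = (2 * n + 1) + n)%N by lia.
have -> : ((3 * q).-1 = (2 * q).-1 + q)%N by lia.
rewrite !exprD !natrM; ring.
Qed.

Lemma pderiv_f_nq_z : pderiv_at (f_nq R n q) i2 v = y.
Proof. by rewrite pderiv_f_nq /= !mulr1 !mulr0; ring. Qed.

End PartialDerivatives.

Section Norms.
Variable R : realType.
Local Notation normc := (@Normc.normc R).

Lemma normc_ge0 (w : Cx R) : 0 <= normc w.
Proof. by case: w => a b; rewrite /Normc.normc sqrtr_ge0. Qed.

Lemma normcX (w : Cx R) k : normc (w ^+ k) = normc w ^+ k.
Proof. by elim: k => [|k IH]; rewrite ?expr0 ?Normc.normc1 // !exprS Normc.normcM IH. Qed.

Lemma normc_natM (w : Cx R) k : normc (k%:R * w) = k%:R * normc w.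
Proof. by rewrite mulr_natl complex.normcMn mulr_natl. Qed.

Lemma normc_cconj (w : Cx R) : normc (cconj w) = normc w.
Proof. by case: w => a b; rewrite /Normc.normc /cconj /= sqrrN. Qed.

Lemma normc_le_vnorm {m} (x : 'I_m -> Cx R) j : normc (x j) <= vnorm x.
Proof.
rewrite /vnorm (bigD1 j) //=; case: (x j) => a b; rewrite /Normc.normc /=.
apply: ler_wsqrtr; rewrite lerDl; apply: sumr_ge0 => i _.
by rewrite addr_ge0 // sqr_ge0.
Qed.

Lemma normc_pderiv_le_grad {m} (g : {mpoly (Cx R)[m]}) x j :
  normc (pderiv_at g j x) <= vnorm (grad g x).
Proof. by rewrite -normc_cconj; apply: (normc_le_vnorm (grad g x) j). Qed.

Lemma vnorm3 (x : 'I_3 -> Cx R) : vnorm x = Num.sqrt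
  (complex.Re (x i0) ^+ 2 + complex.Im (x i0) ^+ 2
   + (complex.Re (x i1) ^+ 2 + complex.Im (x i1) ^+ 2)
   + (complex.Re (x i2) ^+ 2 + complex.Im (x i2) ^+ 2)).
Proof.
rewrite /vnorm !big_ord_recr big_ord0 /= add0r.
by congr (Num.sqrt (_ + _ + _)); congr (_ ^+ 2 + _ ^+ 2); congr (_ (x _));
  apply: val_inj.
Qed.

(* The cubic part is dominated by the quadratic one, and both by [1/2]. *)
Lemma normc_cubic_ge (c2 c3 : nat) (u : Cx R) :
  normc u <= 1 -> (c2 + c3)%:R * normc u ^+ 2 <= 2^-1 ->
  2^-1 <= normc (1 - c2%:R * u ^+ 2 + c3%:R * u ^+ 3).
Proof.
move=> u_le1 quad_le.
set w := 1 - _ + _.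
have split1 : w + (c2%:R * u ^+ 2 - c3%:R * u ^+ 3) = 1 by rewrite /w; ring.
have tri := complex.le_normcD w (c2%:R * u ^+ 2 - c3%:R * u ^+ 3).
rewrite split1 Normc.normc1 in tri.
have tri2 := complex.le_normcD (c2%:R * u ^+ 2) (- (c3%:R * u ^+ 3)).
rewrite complex.normcN !normc_natM !normcX in tri2.
have u3 : normc u ^+ 3 <= normc u ^+ 2.
  by rewrite exprS ler_piMl ?exprn_ge0 ?normc_ge0.
have : c3%:R * normc u ^+ 3 <= c3%:R * normc u ^+ 2 by rewrite ler_wpM2l.
rewrite natrD mulrDl in quad_le; lra.
Qed.

End Norms.

Section RealPowers.
Variable R : realType.

Lemma powRN_le1 (r a : R) : 1 <= r -> 0 <= a -> r `^ (- a) <= 1.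
Proof.
move=> r_ge1 a_ge0; rewrite powRN invf_le1 ?powR_gt0 ?(lt_le_trans ltr01) //.
by rewrite -[X in X <= _](powRr0 r) ler_powR.
Qed.

Lemma powRN_ratio_expn (r : R) n q : 0 <= r -> (0 < q)%N ->
  (r `^ (- (n%:R / q%:R))) ^+ q = (r ^+ n)^-1.
Proof.
move=> r_ge0 q_gt0.
rewrite -powR_mulrn ?powR_ge0 // -powRrM mulNr divfK ?pnatr_eq0 -?lt0n //.
exact: powR_invn.
Qed.

Lemma powR_homo {a b p : R} : 0 <= p -> 0 <= a -> a <= b -> a `^ p <= b `^ p.
Proof.
move=> p_ge0 a_ge0 ab; apply: (ge0_ler_powR p_ge0) => //; rewrite nnegrE //.
exact: le_trans ab.
Qed.

Lemma powRN_anti {a b p : R} :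
  0 <= p -> 0 < a -> a <= b -> b `^ (- p) <= a `^ (- p).
Proof.
move=> p_ge0 a_gt0 ab; rewrite !powRN lef_pV2 ?posrE ?powR_gt0 //.
  exact: powR_homo (ltW a_gt0) ab.
exact: lt_le_trans ab.
Qed.

(* If [nu > -a], the factor [r `^ (nu + a)] eventually beats every constant. *)
Lemma exponent_le_of_bound (A B a nu : R) : 0 < A -> 0 <= a ->
  (forall X, B <= X -> 1 <= X ->
     exists2 r, X <= r <= 2 * X & A * r `^ nu <= X `^ (- a)) ->
  nu <= - a.
Proof.
move=> A_gt0 a_ge0 bound; rewrite leNgt; apply/negP => nu_gt.
set e := nu + a; have e_gt0 : 0 < e by rewrite /e; lra.
set k := 2 * 2 `^ a / A.
have k_ge0 : 0 <= k by rewrite divr_ge0 ?mulr_ge0 ?powR_ge0 ?ltW.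
set X := Num.max (Num.max 1 B) (k `^ e^-1).
have X_ge1 : 1 <= X by rewrite /X !le_max lexx.
have X_gt0 : 0 < X := lt_le_trans ltr01 X_ge1.
have B_le_X : B <= X by rewrite /X !le_max lexx orbT.
have [r /andP[Xr r2X] Hr] := bound X B_le_X X_ge1.
have r_gt0 : 0 < r := lt_le_trans X_gt0 Xr.
have r_nu : r `^ nu = r `^ (- a) * r `^ e.
  by rewrite -powRD ?(gt_eqF r_gt0) ?implybT // /e addrCA addNr addr0.
have r_Na : 2 `^ (- a) * X `^ (- a) <= r `^ (- a).
  by rewrite -powRM ?ler0n ?(ltW X_gt0) // powRN_anti.
have r_e : k <= r `^ e.
  have X_r : X `^ e <= r `^ e := powR_homo (ltW e_gt0) (ltW X_gt0) Xr.
  apply: le_trans X_r.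
  rewrite -[X in X <= _](powRr1 k_ge0) -(mulVf (lt0r_neq0 e_gt0)) powRrM.
  by apply: powR_homo (ltW e_gt0) (powR_ge0 _ _) _; rewrite /X !le_max lexx orbT.
have : A * (2 `^ (- a) * X `^ (- a) * k) <= X `^ (- a).
  apply: le_trans Hr; rewrite r_nu ler_pM2l //.
  by apply: ler_pM => //; rewrite ?mulr_ge0 ?powR_ge0.
have -> : A * (2 `^ (- a) * X `^ (- a) * k) = 2 * X `^ (- a).
  rewrite /k powRN; field.
  by rewrite lt0r_neq0 ?powR_gt0 ?gt_eqF.
have : 0 < X `^ (- a) by rewrite powR_gt0.
lra.
Qed.

End RealPowers.

Section GradientBounds.
Variables (R : realType) (n q : nat).
Hypothesis q_gt0 : (0 < q)%N.
Local Notation f := (f_nq R n q).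
Local Notation normc := (@Normc.normc R).
Local Notation alpha := (n%:R / q%:R : R).

Lemma f_nq_noncritical x : ~ critical f x.
Proof.
move=> crit; have := crit i0; rewrite pderiv_f_nq_x.
rewrite (_ : x i1 = 0); last by rewrite -(pderiv_f_nq_z R n q) crit.
rewrite expr0n gtn_eqF // !mulr0 !expr0n /= !mulr0 subr0 addr0.
by move=> one0; have := @oner_neq0 (Cx R); rewrite one0 eqxx.
Qed.

Lemma grad_f_nq_lower_bound x : 1 <= vnorm x ->
  (2 * (12 * n + 5))%:R^-1 * vnorm x `^ (- alpha) <= vnorm (grad f x).
Proof.
move=> r_ge1; set r := vnorm x; set s := r `^ (- alpha).
set K : R := (12 * n + 5)%:R; set d : R := (2 * (12 * n + 5))%:R^-1.
have r_gt0 : 0 < r := lt_le_trans ltr01 r_ge1.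
have K_ge1 : 1 <= K by rewrite /K ler1n addn_gt0 orbT.
have dK : d = (2 * K)^-1 by rewrite /d natrM.
have d_gt0 : 0 < d by rewrite dK invr_gt0 mulr_gt0 // (lt_le_trans ltr01 K_ge1).
have Kd : K * d = 2^-1.
  by rewrite dK invfM mulrCA mulfV ?mulr1 // gt_eqF // (lt_le_trans ltr01 K_ge1).
have d_le_half : d <= 2^-1 by rewrite -Kd; exact: ler_peMl (ltW d_gt0) K_ge1.
have s_le1 : s <= 1 by apply: powRN_le1; rewrite ?divr_ge0 ?ler0n.
have s_gt0 : 0 < s by rewrite powR_gt0.
have [y_ge|y_lt] := lerP (d * s) (normc (x i1)).
  by apply: le_trans y_ge _; rewrite -(pderiv_f_nq_z R n q) normc_pderiv_le_grad.
set u := x i0 ^+ n * x i1 ^+ q.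
have u_le : normc u <= d.
  rewrite /u Normc.normcM !normcX.
  have x0_le : normc (x i0) ^+ n <= r ^+ n.
    by apply: lerXn2r; rewrite ?nnegrE ?normc_ge0 ?normc_le_vnorm ?(ltW r_gt0).
  have y_le : normc (x i1) ^+ q <= (d * s) ^+ q.
    by apply: lerXn2r; rewrite ?nnegrE ?normc_ge0 ?mulr_ge0 ?ltW.
  apply: le_trans (ler_pM _ _ x0_le y_le) _; rewrite ?exprn_ge0 ?normc_ge0 //.
  rewrite exprMn powRN_ratio_expn ?(ltW r_gt0) // mulrCA mulfV ?mulr1.
    rewrite -(prednK q_gt0) exprS ler_piMr ?(ltW d_gt0) //.
    by rewrite exprn_ile1 ?(ltW d_gt0) //; lra.
  by rewrite expf_neq0 ?gt_eqF.
have fx_ge : 2^-1 <= normc (pderiv_at f i0 x).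
  have u_le1 : normc u <= 1 by lra.
  rewrite pderiv_f_nq_x -/u; apply: normc_cubic_ge => //.
  have -> : (3 * (2 * n + 1) + 2 * (3 * n + 1) = 12 * n + 5)%N by lia.
  rewrite -Kd; apply: ler_wpM2l; first exact: ler0n.
  by apply: le_trans u_le; rewrite expr2 ler_piMl ?normc_ge0.
have ds_le : d * s <= d := ler_piMr (ltW d_gt0) s_le1.
have := normc_pderiv_le_grad _ f x i0; lra.
Qed.

Definition f_nq_curve (X : R) : 'I_3 -> Cx R :=
  fun i => complex.real_complex R
    (if val i == 0%N then X else if val i == 1%N then X `^ (- alpha) else 0).

Lemma f_nq_curve_monomial {X} : 0 < X ->
  f_nq_curve X i0 ^+ n * f_nq_curve X i1 ^+ q = 1.
Proof.
move=> X_gt0; rewrite /f_nq_curve /= -!rmorphXn -rmorphM powRN_ratio_expn ?ltW //.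
by rewrite mulfV ?rmorph1 // expf_neq0 ?gt_eqF.
Qed.

Lemma pderiv_f_nq_curve_xy {X} : 0 < X ->
  pderiv_at f i0 (f_nq_curve X) = 0 /\ pderiv_at f i1 (f_nq_curve X) = 0.
Proof.
move=> X_gt0; rewrite pderiv_f_nq_x pderiv_f_nq_y // f_nq_curve_monomial //.
have -> : (3 * (2 * n + 1) = 2 * (3 * n + 1) + 1)%N by lia.
by rewrite subrr mulr0 add0r /f_nq_curve /= rmorph0 natrD; split; ring.
Qed.

Lemma vnorm_grad_f_nq_curve {X} : 0 < X ->
  vnorm (grad f (f_nq_curve X)) = X `^ (- alpha).
Proof.
move=> X_gt0; have [fx0 fy0] := pderiv_f_nq_curve_xy X_gt0.
rewrite vnorm3 /grad fx0 fy0 pderiv_f_nq_z /cconj /f_nq_curve /=.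
by rewrite !oppr0 !expr0n /= !addr0 !add0r sqrtr_sqr ger0_norm ?powR_ge0.
Qed.

Lemma vnorm_f_nq_curve {X} : 1 <= X -> X <= vnorm (f_nq_curve X) <= 2 * X.
Proof.
move=> X_ge1; have X_gt0 : 0 < X := lt_le_trans ltr01 X_ge1.
have t_le1 : X `^ (- alpha) <= 1 by apply: powRN_le1; rewrite ?divr_ge0 ?ler0n.
have t_ge0 : 0 <= X `^ (- alpha) := powR_ge0 _ _.
rewrite vnorm3 /f_nq_curve /= expr0n /= !addr0.
rewrite -[X in X <= _ <= _]ger0_norm ?(ltW X_gt0) // -sqrtr_sqr.
rewrite ler_wsqrtr ?lerDl ?sqr_ge0 //=.
rewrite -[X in _ <= X]ger0_norm ?mulr_ge0 ?(ltW X_gt0) // -sqrtr_sqr ler_wsqrtr //.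
by nra.
Qed.

Lemma loj_exponents_f_nq_le nu : loj_exponents f nu -> nu <= - alpha.
Proof.
case=> A [B [A_gt0 [_ loj]]].
apply: (@exponent_le_of_bound R A B); rewrite ?divr_ge0 ?ler0n //.
move=> X B_le_X X_ge1; exists (vnorm (f_nq_curve X)); first exact: vnorm_f_nq_curve.
rewrite -vnorm_grad_f_nq_curve ?(lt_le_trans ltr01) //; apply: loj.
by case/andP: (vnorm_f_nq_curve X_ge1) => /(le_trans B_le_X).
Qed.

End GradientBounds.

Theorem proposition1p4 (R : realType) (n q : nat) :
  (0 < n)%N -> (0 < q)%N ->
  L_infty (f_nq R n q) = ((- (n%:R / q%:R : R))%:E)%E.
Proof.
move=> _ q_gt0; rewrite /L_infty asboolT; last first.
  by move=> x /f_nq_noncritical.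
apply/le_anti/andP; split.
  apply: ge_ereal_sup => _ [nu nu_loj <-].
  by rewrite lee_fin; exact: loj_exponents_f_nq_le nu_loj.
apply: ereal_sup_ubound; exists (- (n%:R / q%:R)) => //.
exists (2 * (12 * n + 5))%:R^-1, 1.
split; first by rewrite invr_gt0 ltr0n muln_gt0 addn_gt0 orbT.
by split=> // x; exact: grad_f_nq_lower_bound.
Qed.
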